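(* Consider the following MIMO flat-fading model. Fix integers $l_{\mathrm t},l_{\mathrm r},n\ge1$ and a known pilot matrix $S=[s_{t,k}]\in\mathbb{C}^{n\times l_{\mathrm t}}$. Let $\vec{\mathbf h}\sim\mathcal{CN}(\vec\mu_{\vec{\mathbf h}},\Sigma_{\vec{\mathbf h}})$ with $\Sigma_{\vec{\mathbf h}}$ positive definite, $\mathbf f_\delta\sim\mathcal N(\mu_{\mathbf f_\delta},\sigma^2_{\mathbf f_\delta})$ real, noise entries i.i.d. $\mathcal{CN}(0,1)$, all mutually independent, and $\vec{\mathbf y}=\grave X(\mathbf f_\delta)\vec{\mathbf h}+\vec{\mathbf n}$. Then the joint MAP estimation problem of channel and frequency offset, $\max_{(\vec h,f_\delta)\in\mathbb{C}^{l_{\mathrm r}l_{\mathrm t}}\times\mathbb R} f_{\vec{\mathbf h},\mathbf f_\delta,\vec{\mathbf y}}(\vec h,f_\delta,\vec y)$, decomposes into two separable problems: for every $\vec y$, a pair $(\hat{\vec h},\hat f_\delta)$ is a joint maximizer if and only if (1) $\hat f_\delta\in\arg\max_{f_\delta} f_{\vec{\mathbf y}|\mathbf f_\delta}(\vec y|f_\delta)f_{\mathbf f_\delta}(f_\delta)=\arg\max_{f_\delta}g(\vec y,f_\delta)$ (the individual MAP estimate of the frequency offset; it reduces to the ML estimate $\arg\max_{f_\delta}f_{\vec{\mathbf y}|\mathbf f_\delta}(\vec y|f_\delta)$ when $f_{\mathbf f_\delta}$ is taken constant, equivalently $\sigma^{-2}_{\mathbf f_\delta}=0$ in $g$), and (2)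 $\hat{\vec h}=\arg\max_{\vec h} f_{\vec{\mathbf h}|\vec{\mathbf y},\mathbf f_\delta}(\vec h|\vec y,\hat f_\delta)=\hat{\vec h}_{\mathrm{MMSE}}(\vec y,\hat f_\delta)$, where $\hat{\vec h}_{\mathrm{MMSE}}(\vec y,f_\delta)=A\grave X(f_\delta)^\dagger\big(\vec y-\grave X(f_\delta)\vec\mu_{\vec{\mathbf h}}\big)+\vec\mu_{\vec{\mathbf h}}$. Here $g(\vec y,f_\delta)=2\,\mathrm{Re}[\langle\grave X(f_\delta)^\dagger\vec y,\vec b\rangle]+(\grave X(f_\delta)^\dagger\vec y)^\dagger A(\grave X(f_\delta)^\dagger\vec y)-\frac12\sigma_{\mathbf f_\delta}^{-2}|f_\delta-\mu_{\mathbf f_\delta}|^2$.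
   Context: $y_{r,k}=e^{j2\pi \mathbf f_\delta(k-1)}\sum_{t=1}^{l_{\mathrm t}}s_{t,k}h_{r,t}+n_{r,k}$, $r=1..l_{\mathrm r}$, $k=1..n$. $\vec{\mathbf h}$ stacks $h_{r,t}$ in position $(r-1)l_{\mathrm t}+t$; $\vec{\mathbf y},\vec{\mathbf n}$ stack index $(r,k)$ in position $(r-1)n+k$. $F(f)=\mathrm{diag}(e^{j2\pi f(k-1)})_{k=1..n}$, $X(f)=F(f)S$, $\grave X(f)=I_{l_{\mathrm r}}\otimes X(f)$, $\grave S=I_{l_{\mathrm r}}\otimes S$. $A=(\grave S^\dagger\grave S+\Sigma_{\vec{\mathbf h}}^{-1})^{-1}$, $\vec b=(I-A\grave S^\dagger\grave S)\vec\mu_{\vec{\mathbf h}}$. $f_{\vec{\mathbf h},\mathbf f_\delta,\vec{\mathbf y}}$ is the joint density, $f_{\vec{\mathbf h}|\vec{\mathbf y},\mathbf f_\delta}$, $f_{\vec{\mathbf y}|\mathbf f_\delta}$ conditional densities, $f_{\mathbf f_\delta}$ the prior density. $\langle u,v\rangle=v^\dagger u$. *)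

From mathcomp Require Import all_boot all_order all_algebra.
From mathcomp Require Import complex mxtens.
From mathcomp Require Import reals sequences exp trigo.
Set Implicit Arguments.
Unset Strict Implicit.
Unset Printing Implicit Defensive.
Import GRing.Theory Num.Theory.
Local Open Scope ring_scope.

Section MIMO.
Context {R : realType}.
Local Notation C := (R[i]).

Definition reC (z : C) : R := complex.Re z.

Definition ctr {m p : nat} (M : 'M[C]_(m, p)) : 'M[C]_(p, m) :=
  (map_mx (@conjc R) M)^T.

Definition ejay (x : R) : C := Complex (cos x) (sin x).

Definition herm_posdef {N : nat} (M : 'M[C]_N) : Prop :=
  ctr M = M /\ forall v : 'cV[C]_N, v != 0 -> 0 < reC ((ctr v *m M *m v) 0 0).

(* F(f) = diag(e^{j 2 pi f (k-1)})_{k=1..n}  (0-based k here) *)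
Definition Fmx (n : nat) (f : R) : 'M[C]_n :=
  diag_mx (\row_(k < n) ejay (2 * pi * f * (k%:R))).

Definition Xmx {n lt : nat} (S : 'M[C]_(n, lt)) (f : R) : 'M[C]_(n, lt) :=
  Fmx n f *m S.

(* grave X(f) = I_{lr} (x) X(f); row index r*n+k, column index r*lt+t *)
Definition Xgr (lr : nat) {n lt : nat} (S : 'M[C]_(n, lt)) (f : R)
  : 'M[C]_(lr * n, lr * lt) := (1%:M : 'M[C]_lr) *t Xmx S f.

Definition Sgr (lr : nat) {n lt : nat} (S : 'M[C]_(n, lt))
  : 'M[C]_(lr * n, lr * lt) := (1%:M : 'M[C]_lr) *t S.

Definition cn_density {N : nat} (mu : 'cV[C]_N) (Sig : 'M[C]_N) (x : 'cV[C]_N) : R :=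
  expR (- reC ((ctr (x - mu) *m invmx Sig *m (x - mu)) 0 0))
  / (pi ^+ N * reC (\det Sig)).

Definition gauss_density (mu s2 x : R) : R :=
  expR (- (x - mu) ^+ 2 / (2 * s2)) / Num.sqrt (2 * pi * s2).

Context (lt lr n : nat) (S : 'M[C]_(n, lt))
        (mu_h : 'cV[C]_(lr * lt)) (Sig_h : 'M[C]_(lr * lt))
        (mu_f s2_f : R).

Definition f_h (h : 'cV[C]_(lr * lt)) : R := cn_density mu_h Sig_h h.
Definition f_f (f : R) : R := gauss_density mu_f s2_f f.

Definition f_y_hf (y : 'cV[C]_(lr * n)) (h : 'cV[C]_(lr * lt)) (f : R) : R :=
  cn_density (Xgr lr S f *m h) 1%:M y.

Definition f_joint (h : 'cV[C]_(lr * lt)) (f : R) (y : 'cV[C]_(lr * n)) : R :=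
  f_y_hf y h f * f_h h * f_f f.

Definition f_y_f (y : 'cV[C]_(lr * n)) (f : R) : R :=
  cn_density (Xgr lr S f *m mu_h)
             (Xgr lr S f *m Sig_h *m ctr (Xgr lr S f) + 1%:M) y.

Definition f_h_yf (h : 'cV[C]_(lr * lt)) (y : 'cV[C]_(lr * n)) (f : R) : R :=
  f_joint h f y / (f_y_f y f * f_f f).

Definition Amx : 'M[C]_(lr * lt) :=
  invmx (ctr (Sgr lr S) *m Sgr lr S + invmx Sig_h).
Definition bvec : 'cV[C]_(lr * lt) :=
  (1%:M - Amx *m ctr (Sgr lr S) *m Sgr lr S) *m mu_h.

(* g(y, f); <u, v> = v^dag u *)
Definition gfun (y : 'cV[C]_(lr * n)) (f : R) : R :=
  let u := ctr (Xgr lr S f) *m y in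
  2 * reC ((ctr bvec *m u) 0 0) + reC ((ctr u *m Amx *m u) 0 0)
  - 2^-1 * s2_f^-1 * (f - mu_f) ^+ 2.

Definition h_mmse (y : 'cV[C]_(lr * n)) (f : R) : 'cV[C]_(lr * lt) :=
  Amx *m ctr (Xgr lr S f) *m (y - Xgr lr S f *m mu_h) + mu_h.

End MIMO.

(* Complete the square in h.  With B := S'^dag S' + Sig^-1 and A := B^-1 (S' = I (x) S),
   the Woodbury identity (X Sig X^dag + I)^-1 = I - X A X^dag gives
     |y - X h|^2 + (h - mu)^dag Sig^-1 (h - mu)
       = (h - h_mmse)^dag B (h - h_mmse) + r^dag (X Sig X^dag + I)^-1 r,   r = y - X mu.
   Since X(f) = (I (x) F(f)) S' with I (x) F(f) unitary, neither X(f)^dag X(f) = S'^dag S' nor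
   det (X(f) Sig X(f)^dag + I) depends on f.  So the joint density factors as
   exp (-(h - h_mmse)^dag B (h - h_mmse)) * f_{y|f} f_f * K with K > 0 constant, and
   f_{y|f} f_f = exp g * K'(y).  As B is positive definite, the first factor is at most 1,
   with equality exactly at h = h_mmse, which separates the maximisation over (h, f). *)

From mathcomp Require Import all_boot all_order all_algebra.
From mathcomp Require Import complex mxtens.
From mathcomp Require Import reals sequences exp trigo.
From mathcomp Require Import ring lra.
Set Implicit Arguments.
Unset Strict Implicit.
Unset Printing Implicit Defensive.
Import Order.TTheory GRing.Theory Num.Theory.
Local Open Scope ring_scope.

Section SeparableArgmax.
Variables (R : realType) (T : Type) (hm : R -> T) (Q : T -> R -> R)
  (P : R -> R) (K : R) (J : T -> R -> R).
Hypotheses (K_gt0 : 0 < K) (P_gt0 : forall f, 0 < P f)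
  (Q_ge0 : forall h f, 0 <= Q h f) (Q_eq0 : forall h f, Q h f = 0 <-> h = hm f)
  (J_factor : forall h f, J h f = expR (- Q h f) * P f * K).

Lemma argminQ f hh : (forall h, Q hh f <= Q h f) <-> hh = hm f.
Proof.
split=> [minQ | -> h]; last by rewrite (proj2 (Q_eq0 _ _) erefl).
by apply/Q_eq0/eqP; rewrite eq_le Q_ge0 andbT -(proj2 (Q_eq0 _ f) erefl).
Qed.

Lemma J_le h f : J h f <= P f * K.
Proof.
rewrite J_factor -mulrA; apply: ler_piMl; first by rewrite ltW ?mulr_gt0.
by rewrite -expR0 ler_expR oppr_le0.
Qed.

Lemma J_argmin f : J (hm f) f = P f * K.
Proof. by rewrite J_factor (proj2 (Q_eq0 _ _) erefl) oppr0 expR0 mul1r. Qed.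

Lemma argmax_conditional f hh :
  (forall h, J h f / P f <= J hh f / P f) <-> hh = hm f.
Proof.
have JP h : J h f / P f = expR (- Q h f) * K.
  by rewrite J_factor mulrAC mulfK ?gt_eqF.
rewrite -argminQ; split=> maxJ h; have := maxJ h;
  by rewrite !JP ler_pM2r // ler_expR lerN2.
Qed.

Lemma argmax_joint hh fh :
  (forall h f, J h f <= J hh fh) <-> (forall f, P f <= P fh) /\ hh = hm fh.
Proof.
split=> [maxJ | [maxP ->] h f].
  split=> [f|]; first by rewrite -(ler_pM2r K_gt0) -J_argmin (le_trans _ (J_le hh fh)).
  apply/argminQ => h; have := maxJ (hm fh) fh.
  rewrite J_argmin J_factor -mulrA -{1}[P fh * K]mul1r ler_pM2r ?mulr_gt0 //.
  by rewrite -expR0 ler_expR oppr_ge0 => /le_trans; apply.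
by rewrite J_argmin (le_trans (J_le h f)) // ler_pM2r.
Qed.

End SeparableArgmax.

Lemma argmax_expR_scale (R : realType) (P g : R -> R) (K : R) :
  0 < K -> (forall f, P f = expR (g f) * K) ->
  forall fh, (forall f, P f <= P fh) <-> (forall f, g f <= g fh).
Proof.
move=> K_gt0 P_factor fh; split=> maxP f; have := maxP f;
  by rewrite !P_factor ler_pM2r // ler_expR.
Qed.

Lemma expRN_split (R : realType) (a b q c : R) (abqc : a + b = q + c) :
  expR (- a) * expR (- b) = expR (- q) * expR (- c).
Proof. by rewrite -!expRD -!opprD abqc. Qed.

Lemma mulr_regroup (R : comPzRingType) (a b q c k1 k2 k : R)
  (abqc : a * b = q * c) (kk : k1 * k2 = k) : a * k1 * (b * k2) = q * (c * k).
Proof. by rewrite mulrACA abqc kk mulrA. Qed.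

Lemma mulr_regroup_scaled (R : comPzRingType) (a b q c k1 k2 k3 K w : R)
  (abqc : a * b = q * c) (kk : k1 * k2 = k3 * K) :
  a * k1 * (b * k2) * w = q * (c * k3 * w) * K.
Proof. by rewrite mulrACA abqc kk; ring. Qed.

Section ComplexMatrices.
Variable R : realType.
Local Notation C := R[i].

Lemma ctrM m p q (A : 'M[C]_(m, p)) (B : 'M[C]_(p, q)) :
  ctr (A *m B) = ctr B *m ctr A.
Proof. by rewrite /ctr map_mxM trmx_mul. Qed.

Lemma ctrD m p (A B : 'M[C]_(m, p)) : ctr (A + B) = ctr A + ctr B.
Proof. by apply/matrixP => i j; rewrite !mxE rmorphD. Qed.

Lemma ctrB m p (A B : 'M[C]_(m, p)) : ctr (A - B) = ctr A - ctr B.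
Proof. by apply/matrixP => i j; rewrite !mxE rmorphB. Qed.

Lemma ctrK m p (A : 'M[C]_(m, p)) : ctr (ctr A) = A.
Proof. by apply/matrixP => i j; rewrite !mxE conjcK. Qed.

Lemma ctr0 m p : ctr (0 : 'M[C]_(m, p)) = 0.
Proof. by apply/matrixP => i j; rewrite !mxE rmorph0. Qed.

Lemma ctr1 m : ctr (1%:M : 'M[C]_m) = 1%:M.
Proof. by apply/matrixP => i j; rewrite !mxE rmorphMn rmorph1 eq_sym. Qed.

Lemma ctr_inv m (A : 'M[C]_m) : ctr (invmx A) = invmx (ctr A).
Proof. by rewrite /ctr map_invmx trmx_inv. Qed.

Lemma ctr_tensmx m n p q (A : 'M[C]_(m, n)) (B : 'M[C]_(p, q)) :
  ctr (A *t B) = ctr A *t ctr B.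
Proof. by rewrite /ctr map_mxT trmx_tens. Qed.

Lemma tensmx11 m n : (1%:M : 'M[C]_m) *t (1%:M : 'M[C]_n) = 1%:M.
Proof.
apply/matrixP => i j.
case: (mxtens_indexP i) => i0 i1; case: (mxtens_indexP j) => j0 j1.
by rewrite tensmxE !mxE (can_eq (@mxtens_indexK _ _)) xpair_eqE -natrM mulnb.
Qed.

Lemma reCD (a b : C) : reC (a + b) = reC a + reC b.
Proof. by case: a; case: b. Qed.

Lemma reCN (a : C) : reC (- a) = - reC a.
Proof. by case: a. Qed.

Lemma reC00_ctr (M : 'M[C]_1) : reC ((ctr M) 0 0) = reC (M 0 0).
Proof. by rewrite !mxE; case: (M 0 0). Qed.

Lemma reC00D (A B : 'M[C]_1) : reC ((A + B) 0 0) = reC (A 0 0) + reC (B 0 0).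
Proof. by rewrite !mxE reCD. Qed.

Lemma reC00N (A : 'M[C]_1) : reC ((- A) 0 0) = - reC (A 0 0).
Proof. by rewrite !mxE reCN. Qed.

Lemma dot_ge0 m (w : 'cV[C]_m) : 0 <= reC ((ctr w *m w) 0 0).
Proof.
have : 0 <= (ctr w *m w) 0 0.
  by rewrite mxE; apply: sumr_ge0 => k _; rewrite !mxE mulrC mul_conjC_ge0.
by rewrite lecE => /andP[].
Qed.

Lemma dot_gt0 m (w : 'cV[C]_m) : w != 0 -> 0 < reC ((ctr w *m w) 0 0).
Proof.
move=> w_neq0.
have terms_ge0 k : 0 <= ctr w 0 k * w k 0 by rewrite !mxE mulrC mul_conjC_ge0.
have : 0 < (ctr w *m w) 0 0.
  rewrite lt_def mxE sumr_ge0 // andbT psumr_eq0 //.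
  apply: contra w_neq0 => /allP w0; apply/eqP/matrixP => k j; rewrite [j]ord1 mxE.
  by have /w0 := mem_index_enum k; rewrite /= !mxE mulrC mul_conjC_eq0 => /eqP.
by rewrite ltcE => /andP[].
Qed.

Lemma mulmx_ctr_diag m p (A B : 'M[C]_(m, p)) i :
  (A *m ctr B) i i = (row i A *m ctr (row i B)) 0 0.
Proof. by rewrite !mxE; apply: eq_bigr => k _; rewrite !mxE. Qed.

Lemma det_unitary_conj m (D M : 'M[C]_m) :
  ctr D *m D = 1%:M -> \det (D *m M *m ctr D) = \det M.
Proof. by move=> DD; rewrite !det_mulmx mulrC mulrA -det_mulmx DD det1 mul1r. Qed.

Lemma invmx_right m (A B : 'M[C]_m) : A *m B = 1%:M -> invmx A = B.
Proof.
by move=> AB; have [Au _] := mulmx1_unit AB; rewrite -[invmx A]mulmx1 -AB mulKmx.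
Qed.

Lemma woodbury p m (X : 'M[C]_(p, m)) (Sig : 'M[C]_m) :
  Sig \in unitmx -> ctr X *m X + invmx Sig \in unitmx ->
  invmx (X *m Sig *m ctr X + 1%:M)
  = 1%:M - X *m invmx (ctr X *m X + invmx Sig) *m ctr X.
Proof.
set B := ctr X *m X + invmx Sig => Sig_u B_u; apply: invmx_right.
have SigB : Sig *m ctr X *m X + 1%:M = Sig *m B by rewrite mulmxDr mulmxV // mulmxA.
rewrite mulmxBr mulmx1 mulmxDl mul1mx.
have -> : X *m Sig *m ctr X *m (X *m invmx B *m ctr X) + X *m invmx B *m ctr X
          = X *m ((Sig *m ctr X *m X + 1%:M) *m invmx B) *m ctr X.
  by rewrite !(mulmxDl, mulmxDr) mul1mx !mulmxA.
by rewrite SigB mulmxK // [_ + 1%:M]addrC addrK.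
Qed.

Lemma mx11_entry_inj (A B : 'M[C]_1) : A 0 0 = B 0 0 -> A = B.
Proof. by move=> AB; rewrite [A]mx11_scalar [B]mx11_scalar AB. Qed.

Lemma form_subr m (a b : 'cV[C]_m) (M : 'M[C]_m) :
  ctr (a - b) *m M *m (a - b) =
  ctr a *m M *m a - ctr a *m M *m b - ctr b *m M *m a + ctr b *m M *m b.
Proof.
rewrite ctrB !(mulmxBl, mulmxBr).
move: (ctr a *m M *m a) (ctr a *m M *m b) (ctr b *m M *m a) (ctr b *m M *m b).
by move=> aa ab ba bb; apply: mx11_entry_inj; rewrite !mxE; ring.
Qed.

Lemma complete_square m (M : 'M[C]_m) (d c : 'cV[C]_m) :
  M \in unitmx -> ctr M = M ->
  ctr (d - invmx M *m c) *m M *m (d - invmx M *m c)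
  = ctr d *m M *m d - ctr d *m c - ctr c *m d + ctr c *m invmx M *m c.
Proof.
move=> M_u M_herm.
by rewrite form_subr ctrM ctr_inv M_herm !mulmxA (mulmxKV M_u) (mulmxK M_u).
Qed.
End ComplexMatrices.

Section HermitianPositiveDefinite.
Variable R : realType.
Local Notation C := R[i].

Lemma herm_posdef_form_ge0 m (M : 'M[C]_m) (v : 'cV[C]_m) :
  herm_posdef M -> 0 <= reC ((ctr v *m M *m v) 0 0).
Proof.
move=> [_ M_pos]; have [->|v_neq0] := eqVneq v 0; last exact/ltW/M_pos.
by rewrite mulmx0 mxE.
Qed.

Lemma herm_posdef_form_eq0 m (M : 'M[C]_m) (v : 'cV[C]_m) :
  herm_posdef M -> reC ((ctr v *m M *m v) 0 0) = 0 <-> v = 0.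
Proof.
move=> [_ M_pos]; split=> [form0|->]; last by rewrite mulmx0 mxE.
by apply/eqP/negPn/negP => /M_pos; rewrite form0 ltxx.
Qed.

Lemma herm_posdef_unit m (M : 'M[C]_m) : herm_posdef M -> M \in unitmx.
Proof.
move=> M_pd; rewrite -row_free_unit -kermx_eq0; apply/rowV0P => u /sub_kermxP uM0.
have : reC ((ctr (ctr u) *m M *m ctr u) 0 0) = 0 by rewrite ctrK uM0 mul0mx mxE.
by move/(herm_posdef_form_eq0 _ M_pd)/(congr1 ctr); rewrite ctrK ctr0.
Qed.

Lemma herm_posdef_inv m (M : 'M[C]_m) : herm_posdef M -> herm_posdef (invmx M).
Proof.
move=> M_pd; have M_u := herm_posdef_unit M_pd.
split=> [|v v_neq0]; first by rewrite ctr_inv M_pd.1.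
have w_neq0 : invmx M *m v != 0.
  by apply: contraNneq v_neq0 => w0; rewrite -(mulKVmx M_u v) w0 mulmx0.
have := M_pd.2 _ w_neq0.
by rewrite ctrM ctr_inv M_pd.1 -(mulmxA _ M) mulKVmx.
Qed.

Lemma herm_posdef_gram_add p m (X : 'M[C]_(p, m)) (M : 'M[C]_m) :
  herm_posdef M -> herm_posdef (ctr X *m X + M).
Proof.
move=> M_pd; split=> [|v v_neq0]; first by rewrite ctrD ctrM ctrK M_pd.1.
have := dot_ge0 (X *m v); have := M_pd.2 v v_neq0.
rewrite mulmxDr mulmxDl reC00D ctrM !mulmxA; lra.
Qed.

Lemma herm_posdef_congr_add1 p m (X : 'M[C]_(p, m)) (M : 'M[C]_m) :
  herm_posdef M -> herm_posdef (X *m M *m ctr X + 1%:M).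
Proof.
move=> M_pd; split=> [|v v_neq0].
  by rewrite ctrD ctr1 !ctrM ctrK M_pd.1 mulmxA.
have := dot_gt0 v_neq0; have := herm_posdef_form_ge0 (ctr X *m v) M_pd.
rewrite mulmxDr mulmxDl reC00D mulmx1 ctrM ctrK !mulmxA; lra.
Qed.

Lemma herm_posdef_det_gt0 m (M : 'M[C]_m) : herm_posdef M -> 0 < reC (\det M).
Proof.
move=> M_pd.
have M_herm : M \is hermsymmx.
  by apply/is_hermitianmxP; rewrite expr0 scale1r -map_trmx; exact: esym M_pd.1.
set P := spectralmx M; set d := spectral_diag M.
have P_unitary : P *m ctr P = 1%:M.
  by rewrite /ctr map_trmx; apply/unitarymxP/spectral_unitarymx.
have PMP : P *m M *m ctr P = diag_mx d.
  have /orthomx_spectralP -> := hermitian_normalmx M_herm.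
  rewrite /ctr map_trmx -invmx_unitary ?spectral_unitarymx //.
  by rewrite !mulmxA mulmxV ?spectral_unit // mul1mx mulmxK ?spectral_unit.
have -> : \det M = \prod_i d 0 i.
  by rewrite -det_diag -PMP det_unitary_conj // mulmx1C.
suff : 0 < \prod_i d 0 i by rewrite ltcE => /andP[].
apply: prodr_gt0 => i _.
have d_form : d 0 i = (ctr (ctr (row i P)) *m M *m ctr (row i P)) 0 0.
  by rewrite ctrK -row_mul -mulmx_ctr_diag PMP mxE eqxx mulr1n.
have v_neq0 : ctr (row i P) != 0.
  apply: contra_eqN (mulmx_ctr_diag P P i) => /eqP ->.
  by rewrite mulmx0 P_unitary !mxE eqxx oner_eq0.
have /mxOverP /(_ 0 i) /complex_realP [k d_real] :=
  hermitian_spectral_diag_real M_herm.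
have := M_pd.2 _ v_neq0; rewrite -d_form -/d d_real.
by rewrite ltcE /= eqxx.
Qed.

End HermitianPositiveDefinite.

Section LinearGaussian.
Variables (R : realType) (p m : nat) (X : 'M[R[i]]_(p, m)) (Sig : 'M[R[i]]_m).
Hypothesis Sig_pd : herm_posdef Sig.

Local Notation G := (ctr X *m X).
Local Notation B := (G + invmx Sig).
Local Notation A := (invmx B).

Lemma posterior_precision_pd : herm_posdef B.
Proof. exact/herm_posdef_gram_add/herm_posdef_inv. Qed.

Lemma ctr_posterior_cov : ctr A = A.
Proof. by rewrite ctr_inv posterior_precision_pd.1. Qed.

Lemma invmx_marginal_cov : invmx (X *m Sig *m ctr X + 1%:M) = 1%:M - X *m A *m ctr X.
Proof.
by rewrite woodbury ?herm_posdef_unit //; last exact: posterior_precision_pd.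
Qed.

Lemma marginal_form (r : 'cV[R[i]]_p) :
  ctr r *m invmx (X *m Sig *m ctr X + 1%:M) *m r
  = ctr r *m r - ctr (ctr X *m r) *m A *m (ctr X *m r).
Proof. by rewrite invmx_marginal_cov mulmxBr mulmxBl mulmx1 ctrM ctrK !mulmxA. Qed.

Lemma gaussian_exponent_split (y : 'cV[R[i]]_p) (h mu : 'cV[R[i]]_m) :
  reC ((ctr (y - X *m h) *m (y - X *m h)) 0 0)
  + reC ((ctr (h - mu) *m invmx Sig *m (h - mu)) 0 0)
  = reC ((ctr (h - (A *m ctr X *m (y - X *m mu) + mu)) *m B
          *m (h - (A *m ctr X *m (y - X *m mu) + mu))) 0 0)
  + reC ((ctr (y - X *m mu) *m invmx (X *m Sig *m ctr X + 1%:M)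
          *m (y - X *m mu)) 0 0).
Proof.
rewrite -!reC00D; apply: (congr1 (fun M : 'M[R[i]]_1 => reC (M 0 0))).
have -> : y - X *m h = (y - X *m mu) - X *m (h - mu).
  by rewrite mulmxBr opprB addrA subrK.
have -> : h - (A *m ctr X *m (y - X *m mu) + mu)
          = (h - mu) - A *m (ctr X *m (y - X *m mu)).
  by rewrite opprD addrA addrAC mulmxA.
move: (y - X *m mu) (h - mu) => r d.
have B_pd := posterior_precision_pd.
rewrite (complete_square _ _ (herm_posdef_unit B_pd) B_pd.1) marginal_form.
rewrite -[ctr (r - _)]mulmx1 form_subr mulmxDr mulmxDl !mulmx1 !ctrM ctrK !mulmxA.
move: (ctr r *m r) (ctr r *m X *m d) (ctr d *m ctr X *m r)
  (ctr d *m ctr X *m X *m d) (ctr d *m invmx Sig *m d)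
  (ctr r *m X *m A *m ctr X *m r) => rr rXd dXr dGd dSd rAr.
by apply: mx11_entry_inj; rewrite !mxE; ring.
Qed.

Lemma marginal_exponent_expand (y : 'cV[R[i]]_p) (mu : 'cV[R[i]]_m) :
  - (ctr (y - X *m mu) *m invmx (X *m Sig *m ctr X + 1%:M) *m (y - X *m mu))
  = ctr ((1%:M - A *m G) *m mu) *m (ctr X *m y)
    + ctr (ctr ((1%:M - A *m G) *m mu) *m (ctr X *m y))
    + ctr (ctr X *m y) *m A *m (ctr X *m y) - ctr y *m y - ctr mu *m G *m mu
    + ctr (G *m mu) *m A *m (G *m mu).
Proof.
have ctrG : ctr G = G by rewrite ctrM ctrK.
have Xr : ctr X *m (y - X *m mu) = ctr X *m y - G *m mu by rewrite mulmxBr mulmxA.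
have bu : ctr ((1%:M - A *m G) *m mu) *m (ctr X *m y)
          = ctr mu *m ctr X *m y - ctr mu *m ctr X *m X *m A *m ctr X *m y.
  by rewrite ctrM ctrB ctr1 ctrM ctrG ctr_posterior_cov mulmxBr mulmx1 mulmxBl !mulmxA.
have ub : ctr (ctr ((1%:M - A *m G) *m mu) *m (ctr X *m y))
          = ctr y *m X *m mu - ctr y *m X *m A *m ctr X *m X *m mu.
  by rewrite ctrM !ctrK ctrM ctrK mulmxBl mul1mx mulmxBr !mulmxA.
rewrite marginal_form Xr -[ctr (y - _)]mulmx1 !form_subr ub bu !ctrM ctrK !mulmx1 !mulmxA.
generalize (ctr y *m y) (ctr y *m X *m mu) (ctr mu *m ctr X *m y)
  (ctr mu *m ctr X *m X *m mu) (ctr y *m X *m A *m ctr X *m y)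
  (ctr y *m X *m A *m ctr X *m X *m mu) (ctr mu *m ctr X *m X *m A *m ctr X *m y)
  (ctr mu *m ctr X *m X *m A *m ctr X *m X *m mu).
move=> yy yXm mXy mGm uAu uAg gAu gAg.
by apply: mx11_entry_inj; rewrite !mxE; ring.
Qed.

Lemma reC_marginal_exponent (y : 'cV[R[i]]_p) (mu : 'cV[R[i]]_m) :
  - reC ((ctr (y - X *m mu) *m invmx (X *m Sig *m ctr X + 1%:M) *m (y - X *m mu)) 0 0)
  = 2 * reC ((ctr ((1%:M - A *m G) *m mu) *m (ctr X *m y)) 0 0)
    + reC ((ctr (ctr X *m y) *m A *m (ctr X *m y)) 0 0) - reC ((ctr y *m y) 0 0)
    - reC ((ctr mu *m G *m mu) 0 0)
    + reC ((ctr (G *m mu) *m A *m (G *m mu)) 0 0).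
Proof.
by rewrite mulr_natl mulr2n -reC00N marginal_exponent_expand !(reC00D, reC00N) reC00_ctr.
Qed.

End LinearGaussian.

Section Model.
Variables (R : realType) (lt lr n : nat) (S : 'M[R[i]]_(n, lt)).
Variables (mu_h : 'cV[R[i]]_(lr * lt)) (Sig_h : 'M[R[i]]_(lr * lt)).
Hypothesis Sig_pd : herm_posdef Sig_h.
Variables (mu_f s2_f : R).
Hypothesis s2_gt0 : 0 < s2_f.

Local Notation X f := (Xgr lr S f).
Local Notation Sg := (Sgr lr S).
Local Notation Bmx := (ctr Sg *m Sg + invmx Sig_h).
Local Notation A := (Amx S Sig_h).
Local Notation Cy f := (X f *m Sig_h *m ctr (X f) + 1%:M).
Local Notation Cy0 := (Sg *m Sig_h *m ctr Sg + 1%:M).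

Lemma Fmx_unitary (f : R) : ctr (Fmx n f) *m Fmx n f = 1%:M.
Proof.
apply/matrixP => i j; rewrite !mxE (bigD1 j) //= big1 => [|k /negbTE kj]; last first.
  by rewrite !mxE kj mulr0n mulr0.
rewrite !mxE eqxx mulr1n addr0 rmorphMn; have [<-|ij] := eqVneq i j.
  by rewrite !mulr1n /ejay; apply/eqP; rewrite eq_complex /= mulNr opprK -!expr2
    cos2Dsin2 mulNr [sin _ * _]mulrC subrr !eqxx.
by rewrite !mulr0n mul0r.
Qed.

Definition Dmx (f : R) : 'M[R[i]]_(lr * n) := 1%:M *t Fmx n f.

Lemma Dmx_unitary f : ctr (Dmx f) *m Dmx f = 1%:M.
Proof. by rewrite ctr_tensmx tensmx_mul ctr1 mul1mx Fmx_unitary tensmx11. Qed.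

Lemma Xgr_Dmx f : X f = Dmx f *m Sg.
Proof. by rewrite /Xgr /Sgr /Dmx /Xmx tensmx_mul mul1mx. Qed.

Lemma Xgr_gram f : ctr (X f) *m X f = ctr Sg *m Sg.
Proof. by rewrite Xgr_Dmx ctrM mulmxA -(mulmxA _ _ (Dmx f)) Dmx_unitary mulmx1. Qed.

Lemma det_Cy f : \det (Cy f) = \det Cy0.
Proof.
rewrite -(det_unitary_conj Cy0 (Dmx_unitary f)) Xgr_Dmx ctrM.
by rewrite mulmxDr mulmxDl mulmx1 (mulmx1C (Dmx_unitary f)) !mulmxA.
Qed.

Lemma Cy0_pd : herm_posdef Cy0.
Proof. exact: herm_posdef_congr_add1. Qed.

Definition posterior_exponent (y : 'cV[R[i]]_(lr * n)) (h : 'cV[R[i]]_(lr * lt)) (f : R)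
  : R :=
  reC ((ctr (h - h_mmse S mu_h Sig_h y f) *m Bmx *m (h - h_mmse S mu_h Sig_h y f)) 0 0).

Lemma joint_exponent_split y h f :
  reC ((ctr (y - X f *m h) *m invmx 1%:M *m (y - X f *m h)) 0 0)
  + reC ((ctr (h - mu_h) *m invmx Sig_h *m (h - mu_h)) 0 0)
  = posterior_exponent y h f
  + reC ((ctr (y - X f *m mu_h) *m invmx (Cy f) *m (y - X f *m mu_h)) 0 0).
Proof.
rewrite invmx1 mulmx1 /posterior_exponent /h_mmse /Amx -(Xgr_gram f).
exact: gaussian_exponent_split.
Qed.

Definition marginal_offset (y : 'cV[R[i]]_(lr * n)) : R :=
  - reC ((ctr y *m y) 0 0) - reC ((ctr mu_h *m (ctr Sg *m Sg) *m mu_h) 0 0)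
  + reC ((ctr (ctr Sg *m Sg *m mu_h) *m A *m (ctr Sg *m Sg *m mu_h)) 0 0).

Lemma marginal_exponent y f :
  - reC ((ctr (y - X f *m mu_h) *m invmx (Cy f) *m (y - X f *m mu_h)) 0 0)
  = 2 * reC ((ctr (bvec S mu_h Sig_h) *m (ctr (X f) *m y)) 0 0)
    + reC ((ctr (ctr (X f) *m y) *m A *m (ctr (X f) *m y)) 0 0)
    + marginal_offset y.
Proof.
have -> : bvec S mu_h Sig_h = (1%:M - A *m (ctr Sg *m Sg)) *m mu_h.
  by rewrite /bvec mulmxA.
rewrite /marginal_offset /Amx -(Xgr_gram f) (reC_marginal_exponent (X f) Sig_pd).
by rewrite !addrA.
Qed.

Lemma posterior_exponent_ge0 y h f : 0 <= posterior_exponent y h f.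
Proof. exact/herm_posdef_form_ge0/posterior_precision_pd. Qed.

Lemma posterior_exponent_eq0 y h f :
  posterior_exponent y h f = 0 <-> h = h_mmse S mu_h Sig_h y f.
Proof.
have B_pd := posterior_precision_pd Sg Sig_pd.
split=> [/(herm_posdef_form_eq0 _ B_pd)/eqP|->]; first by rewrite subr_eq0 => /eqP.
by rewrite /posterior_exponent subrr mulmx0 mxE.
Qed.

Definition joint_const : R :=
  reC (\det Cy0) / (pi ^+ (lr * lt) * reC (\det Sig_h)).

Definition marginal_const (y : 'cV[R[i]]_(lr * n)) : R :=
  expR (marginal_offset y)
  / (pi ^+ (lr * n) * reC (\det Cy0) * Num.sqrt (2 * pi * s2_f)).

Lemma joint_const_gt0 : 0 < joint_const.
Proof.
rewrite divr_gt0 ?mulr_gt0 ?exprn_gt0 ?pi_gt0 ?herm_posdef_det_gt0 //.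
exact: Cy0_pd.
Qed.

Lemma marginal_const_gt0 y : 0 < marginal_const y.
Proof.
rewrite divr_gt0 ?expR_gt0 ?mulr_gt0 ?exprn_gt0 ?pi_gt0 ?herm_posdef_det_gt0 //.
  exact: Cy0_pd.
by rewrite sqrtr_gt0 !mulr_gt0 ?pi_gt0.
Qed.

Lemma f_joint_factor y h f :
  f_joint S mu_h Sig_h mu_f s2_f h f y
  = expR (- posterior_exponent y h f)
    * (f_y_f S mu_h Sig_h y f * f_f mu_f s2_f f) * joint_const.
Proof.
rewrite /f_joint /f_y_hf /f_h /f_y_f.
apply: (mulr_regroup_scaled _ (expRN_split (joint_exponent_split y h f))).
have dSig_gt0 := herm_posdef_det_gt0 Sig_pd.
have dCy0_gt0 := herm_posdef_det_gt0 Cy0_pd.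
have pi_pow_neq0 k : pi ^+ k != 0 :> R by rewrite expf_neq0 // gt_eqF // pi_gt0.
rewrite det1 det_Cy /joint_const -[reC 1]/1.
by field; rewrite !pi_pow_neq0 (gt_eqF dSig_gt0) (gt_eqF dCy0_gt0).
Qed.

Lemma f_y_f_factor y f :
  f_y_f S mu_h Sig_h y f * f_f mu_f s2_f f
  = expR (gfun S mu_h Sig_h mu_f s2_f y f) * marginal_const y.
Proof.
rewrite /f_y_f /f_f /gauss_density /marginal_const.
apply: mulr_regroup; last by rewrite det_Cy -invfM.
rewrite -!expRD (marginal_exponent y f) /gfun /= invfM; congr expR; ring.
Qed.

End Model.

Theorem theorem2 (R : realType) (lt lr n : nat)
  (Hlt : (0 < lt)%N) (Hlr : (0 < lr)%N) (Hn : (0 < n)%N)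
  (S : 'M[R[i]]_(n, lt))
  (mu_h : 'cV[R[i]]_(lr * lt)) (Sig_h : 'M[R[i]]_(lr * lt))
  (HSig : herm_posdef Sig_h)
  (mu_f s2_f : R) (Hs2 : 0 < s2_f) :
  (* (1) the MAP objective for f_delta has the same maximizers as g *)
  (forall (y : 'cV[R[i]]_(lr * n)) (fh : R),
     (forall f : R, f_y_f S mu_h Sig_h y f * f_f mu_f s2_f f
                    <= f_y_f S mu_h Sig_h y fh * f_f mu_f s2_f fh)
     <-> (forall f : R, gfun S mu_h Sig_h mu_f s2_f y f
                        <= gfun S mu_h Sig_h mu_f s2_f y fh)) /\
  (* (2) the posterior of h given (y, f) is uniquely maximized by the MMSE *)
  (forall (y : 'cV[R[i]]_(lr * n)) (f : R) (hh : 'cV[R[i]]_(lr * lt)),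
     (forall h, f_h_yf S mu_h Sig_h mu_f s2_f h y f
                <= f_h_yf S mu_h Sig_h mu_f s2_f hh y f)
     <-> hh = h_mmse S mu_h Sig_h y f) /\
  (* joint MAP decomposes *)
  (forall (y : 'cV[R[i]]_(lr * n)) (hh : 'cV[R[i]]_(lr * lt)) (fh : R),
     (forall (h : 'cV[R[i]]_(lr * lt)) (f : R),
        f_joint S mu_h Sig_h mu_f s2_f h f y
        <= f_joint S mu_h Sig_h mu_f s2_f hh fh y)
     <-> ((forall f : R, f_y_f S mu_h Sig_h y f * f_f mu_f s2_f f
                         <= f_y_f S mu_h Sig_h y fh * f_f mu_f s2_f fh)
          /\ hh = h_mmse S mu_h Sig_h y fh)).
Proof.
have K_gt0 := joint_const_gt0 S HSig.
have P_factor y := f_y_f_factor S mu_h HSig mu_f s2_f y.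
have P_gt0 y f : 0 < f_y_f S mu_h Sig_h y f * f_f mu_f s2_f f.
  by rewrite P_factor mulr_gt0 ?expR_gt0 ?marginal_const_gt0.
have Q_ge0 y := posterior_exponent_ge0 S mu_h HSig y.
have Q_eq0 y := posterior_exponent_eq0 S mu_h HSig y.
have J_factor y := f_joint_factor S mu_h HSig mu_f s2_f y.
split; [|split] => y.
- exact: argmax_expR_scale (marginal_const_gt0 S mu_h HSig Hs2 y) (P_factor y).
- exact: argmax_conditional K_gt0 (P_gt0 y) (Q_ge0 y) (Q_eq0 y) (J_factor y).
- exact: argmax_joint K_gt0 (P_gt0 y) (Q_ge0 y) (Q_eq0 y) (J_factor y).
Qed.
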